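(* Let $\alpha:A^{\Delta}\to(H,V)$ be a homomorphism onto a finite forest algebra with $H$ idempotent and commutative, and let $\Gamma\subseteq H$ be a reachability class. Define subsets $B_0,B_1,\ldots$ of $\Gamma\times\Gamma$ by: $B_0=\{(h,h')\in\Gamma\times\Gamma:h\neq h'\}$, and for $j\ge 0$, $B_{j+1}$ is the smallest set that contains $\{(\alpha(a)h,\alpha(a)h'):a\in A,\ (h,h')\in B_j,\ (\alpha(a)h,\alpha(a)h')\in B_0\}$ and is closed under the rules: (i) if $(h,h')\in B_{j+1}$, $g\in H$ and $(h+g,h'+g)\in B_0$ then $(h+g,h'+g)\in B_{j+1}$; (ii) if $(h,h'),(g,g')\in B_{j+1}$ and $(h+g,h'+g')\in B_0$ then $(h+g,h'+g')\in B_{j+1}$. Then for all $h,h'\in\Gamma$ with $h\ne h'$ and all $k\ge0$: $(h,h')\in B_k$ if and only if there exist forests $s,t\in H_A$ with $(s)^{\alpha_\Gamma}\sim_k(t)^{\alpha_\Gamma}$, $\alpha(s)=h$ and $\alpha(t)=h'$. Moreover $B_{k+1}\subseteq B_k$ for all $k\ge0$.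
   Context: $A^{\Delta}=(H_A,V_A)$: free forest algebra over finite alphabet $A$; $H_A$ forests (finite ordered sequences of finite ordered $A$-labelled trees) under concatenation; $V_A$ contexts (forests with one hole) acting by substitution; $as$ is the tree with root $a$ and child forest $s$. A forest algebra $(H,V)$ is an additive monoid $H$ with a monoid $V$ acting faithfully on the left, containing the maps $g\mapsto g+h$, $g\mapsto h+g$. For $a\in A$, $\alpha(a)$ is the image of the context $a\square$. Reachability: $h\le h'$ iff $h=vh'$ for some $v\in V$; a reachability class is a class of the relation ($h\le h'$ and $h'\le h$); $h>\Gamma$ means the class of $h$ is strictly above $\Gamma$. $\alpha_\Gamma:A^{\Delta}\to(H_\Gamma,V_\Gamma)$ is the quotient homomorphism identifying all elements of $\{h:h\not>\Gamma\}$ to a single absorbing element $\infty$ (forests identified iff equal values outside this set or both values in it). For a forest $s$, $s^{\alpha_\Gamma}$ is the forest over $A\times H_\Gamma$ obtained by relabeling each node whose subtree is $at$ with $(a,\alpha_\Gamma(t))$. For an alphabet $B$, $\sim_0$ identifies all forests over $B$, and for $s=b_1s_1+\cdots+b_rs_r$, $s\sim_{k+1}s'$ iff $\{(b_i,[s_i]_{\sim_k}):1\le i\le r\}$ equals the corresponding set for $s'$. *)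

From Stdlib Require List.
From mathcomp Require Import all_boot.
Set Implicit Arguments. Unset Strict Implicit. Unset Printing Implicit Defensive.

Inductive tree (A : Type) : Type := Node of A & list (tree A).
Arguments Node {A}.
Definition forest (A : Type) := seq (tree A).

Definition label (A : Type) (t : tree A) : A := let: Node a _ := t in a.
Definition children (A : Type) (t : tree A) : forest A := let: Node _ s := t in s.

(* Contexts: forests with exactly one hole.
   CHole l r      denotes  l + [] + r
   CIn l a c r    denotes  l + a(c) + r *)
Inductive context (A : Type) : Type :=
| CHole of forest A & forest A
| CIn of forest A & A & context A & forest A.
Arguments CHole {A}. Arguments CIn {A}.

Fixpoint fill (A : Type) (p : context A) (s : forest A) : forest A :=
  match p with
  | CHole l r => l ++ s ++ r
  | CIn l a c r => l ++ Node a (fill c s) :: r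
  end.

Definition cwrap (A : Type) (l r : forest A) (q : context A) : context A :=
  match q with
  | CHole l' r' => CHole (l ++ l') (r' ++ r)
  | CIn l' a c r' => CIn (l ++ l') a c (r' ++ r)
  end.

(* composition of contexts: fill (ccomp p q) s = fill p (fill q s) *)
Fixpoint ccomp (A : Type) (p q : context A) : context A :=
  match p with
  | CHole l r => cwrap l r q
  | CIn l a c r => CIn l a (ccomp c q) r
  end.

Definition cid (A : Type) : context A := CHole [::] [::].
Definition cletter (A : Type) (a : A) : context A := CIn [::] a (cid A) [::].

Record forest_algebra := ForestAlgebra {
  fa_H : finType;
  fa_V : finType;
  fa_add : fa_H -> fa_H -> fa_H;
  fa_zero : fa_H;
  fa_comp : fa_V -> fa_V -> fa_V;
  fa_one : fa_V;
  fa_act : fa_V -> fa_H -> fa_H;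
  fa_addA : associative fa_add;
  fa_add0 : left_id fa_zero fa_add;
  fa_addr0 : right_id fa_zero fa_add;
  fa_compA : associative fa_comp;
  fa_comp1 : left_id fa_one fa_comp;
  fa_compr1 : right_id fa_one fa_comp;
  fa_actM : forall v w h, fa_act (fa_comp v w) h = fa_act v (fa_act w h);
  fa_act1 : forall h, fa_act fa_one h = h;
  fa_faithful : forall v w, (forall h, fa_act v h = fa_act w h) -> v = w;
  fa_insr : forall h, exists v, forall g, fa_act v g = fa_add g h;
  fa_insl : forall h, exists v, forall g, fa_act v g = fa_add h g
}.

Arguments fa_add : clear implicits. Arguments fa_zero : clear implicits.
Arguments fa_comp : clear implicits. Arguments fa_one : clear implicits.
Arguments fa_act : clear implicits.

Definition is_fa_hom (A : Type) (F : forest_algebra)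
    (aH : forest A -> fa_H F) (aV : context A -> fa_V F) : Prop :=
  [/\ aH [::] = fa_zero F,
      forall s t, aH (s ++ t) = fa_add F (aH s) (aH t),
      aV (cid A) = fa_one F,
      forall p q, aV (ccomp p q) = fa_comp F (aV p) (aV q) &
      forall p s, aH (fill p s) = fa_act F (aV p) (aH s)].

Definition reach (F : forest_algebra) (h h' : fa_H F) : bool :=
  [exists v, h == fa_act F v h'].

Definition is_reach_class (F : forest_algebra) (Gamma : {set fa_H F}) : Prop :=
  exists h0, forall h, (h \in Gamma) = reach h h0 && reach h0 h.

Definition above (F : forest_algebra) (Gamma : {set fa_H F}) (h : fa_H F) : bool :=
  [exists g in Gamma, reach g h && ~~ reach h g].

(* alpha_Gamma, with H_Gamma represented as option H:
   Some h for h > Gamma, None for the absorbing element infinity *)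
Definition alphaG (A : Type) (F : forest_algebra) (aH : forest A -> fa_H F)
    (Gamma : {set fa_H F}) (s : forest A) : option (fa_H F) :=
  if above Gamma (aH s) then Some (aH s) else None.

Section Relabel.
Variables (A B : Type) (f : A -> forest A -> B).
Fixpoint relabel_tree (t : tree A) : tree B :=
  match t with Node a s => Node (f a s) (map relabel_tree s) end.
Definition relabel (s : forest A) : forest B := map relabel_tree s.
End Relabel.

Definition relabelG (A : Type) (F : forest_algebra) (aH : forest A -> fa_H F)
    (Gamma : {set fa_H F}) (s : forest A) : forest (A * option (fa_H F)) :=
  relabel (fun a t => (a, alphaG aH Gamma t)) s.

Fixpoint simk (B : Type) (k : nat) (s t : forest B) : Prop :=
  match k with
  | 0 => True
  | k'.+1 =>
      (forall u, List.In u s -> exists v, List.In v t /\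
          label u = label v /\ simk k' (children u) (children v)) /\
      (forall v, List.In v t -> exists u, List.In u s /\
          label u = label v /\ simk k' (children u) (children v))
  end.

Definition B0 (F : forest_algebra) (Gamma : {set fa_H F}) (h h' : fa_H F) : Prop :=
  [/\ h \in Gamma, h' \in Gamma & h <> h'].

Inductive Bnext (A : Type) (F : forest_algebra) (al : A -> fa_V F)
    (Gamma : {set fa_H F}) (Bprev : fa_H F -> fa_H F -> Prop)
    : fa_H F -> fa_H F -> Prop :=
| Bnext_base a h h' :
    Bprev h h' -> B0 Gamma (fa_act F (al a) h) (fa_act F (al a) h') ->
    Bnext al Gamma Bprev (fa_act F (al a) h) (fa_act F (al a) h')
| Bnext_add1 h h' g :
    Bnext al Gamma Bprev h h' -> B0 Gamma (fa_add F h g) (fa_add F h' g) ->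
    Bnext al Gamma Bprev (fa_add F h g) (fa_add F h' g)
| Bnext_add2 h h' g g' :
    Bnext al Gamma Bprev h h' -> Bnext al Gamma Bprev g g' ->
    B0 Gamma (fa_add F h g) (fa_add F h' g') ->
    Bnext al Gamma Bprev (fa_add F h g) (fa_add F h' g').

Fixpoint Bset (A : Type) (F : forest_algebra) (al : A -> fa_V F)
    (Gamma : {set fa_H F}) (j : nat) : fa_H F -> fa_H F -> Prop :=
  match j with
  | 0 => B0 Gamma
  | j'.+1 => Bnext al Gamma (Bset al Gamma j')
  end.

From mathcomp Require Import all_boot.
Set Implicit Arguments. Unset Strict Implicit. Unset Printing Implicit Defensive.

(* Soundness is an induction on k and on the derivation of B_k: a letter
   wraps both witnesses in a node with that letter, a sum concatenates them.
   For completeness, ~_(k+1)-equivalence of the relabelled forests s and t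
   matches every root tree of s with a root tree of t carrying the same letter,
   the same alpha_Gamma-value of its children and ~_k-equivalent children, and
   vice versa.  As H is idempotent and commutative, alpha(s) and alpha(t) are
   the sums, over a list of matched pairs, of the values of their two sides;
   by induction each pair has equal values or values in B_(k+1), and the
   closure rules of B_(k+1) carry this over to the sums. *)

Section Reachability.
Variable F : forest_algebra.
Implicit Types (h g : fa_H F).

Lemma reach_refl h : reach h h.
Proof. by apply/existsP; exists (fa_one F); rewrite fa_act1. Qed.

Lemma reach_trans h1 h2 h3 : reach h1 h2 -> reach h2 h3 -> reach h1 h3.
Proof.
move=> /existsP [v /eqP ->] /existsP [w /eqP ->].
by apply/existsP; exists (fa_comp F v w); rewrite fa_actM.
Qed.

Lemma reach_act (v : fa_V F) h : reach (fa_act F v h) h.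
Proof. by apply/existsP; exists v. Qed.

Lemma reach_addr h g : reach (fa_add F h g) h.
Proof. by have [v Hv] := fa_insr g; apply/existsP; exists v; rewrite Hv. Qed.

Lemma reach_addl h g : reach (fa_add F g h) h.
Proof. by have [v Hv] := fa_insl g; apply/existsP; exists v; rewrite Hv. Qed.

Variable Gamma : {set fa_H F}.
Hypothesis Gamma_class : is_reach_class Gamma.

Lemma class_between g1 g2 h :
  g1 \in Gamma -> g2 \in Gamma -> reach g1 h -> reach h g2 -> h \in Gamma.
Proof.
have [h0 HG] := Gamma_class; rewrite !HG => /andP [_ r01] /andP [r20 _] r1h rh2.
by rewrite (reach_trans rh2 r20) (reach_trans r01 r1h).
Qed.

Lemma class_reach h g : h \in Gamma -> g \in Gamma -> reach h g.
Proof.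
have [h0 HG] := Gamma_class; rewrite !HG => /andP [rh0 _] /andP [_ r0g].
exact: reach_trans r0g.
Qed.

Lemma class_not_above h : h \in Gamma -> ~~ above Gamma h.
Proof.
by move=> hG; apply/existsP => -[g /and3P [gG _ /negP]]; apply; apply: class_reach.
Qed.

Lemma class_of_not_above g h :
  g \in Gamma -> reach g h -> ~~ above Gamma h -> h \in Gamma.
Proof.
move=> gG rgh Nh; apply: (class_between gG gG rgh).
by apply: contraNT Nh => Nrhg; apply/existsP; exists g; rewrite gG rgh.
Qed.

End Reachability.

Section Bsets.
Variables (A : Type) (F : forest_algebra) (al : A -> fa_V F).
Variable Gamma : {set fa_H F}.

Lemma Bnext_B0 (P : fa_H F -> fa_H F -> Prop) h h' :
  Bnext al Gamma P h h' -> B0 Gamma h h'.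
Proof. by case. Qed.

Lemma Bset_B0 k h h' : Bset al Gamma k h h' -> B0 Gamma h h'.
Proof. by case: k => [//|k]; apply: Bnext_B0. Qed.

Lemma Bnext_mono (P Q : fa_H F -> fa_H F -> Prop) h h' :
  (forall x y, P x y -> Q x y) -> Bnext al Gamma P h h' -> Bnext al Gamma Q h h'.
Proof.
move=> PQ; elim=> {h h'} [a h h' /PQ|h h' g _|h h' g g' _ Hhh' _].
- exact: Bnext_base.
- exact: Bnext_add1.
- exact: Bnext_add2 Hhh'.
Qed.

Lemma Bset_succ k h h' : Bset al Gamma k.+1 h h' -> Bset al Gamma k h h'.
Proof.
elim: k h h' => [|k IH] h h'; first exact: Bnext_B0.
by apply: Bnext_mono; apply: IH.
Qed.

Hypothesis Gamma_class : is_reach_class Gamma.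
Hypothesis addC : forall h g : fa_H F, fa_add F h g = fa_add F g h.

(* Rules (i) and (ii), for the reflexive closure of B_(j+1); the sums are
   assumed to lie at or above Gamma, which puts them in Gamma as soon as one
   summand pair is in B_(j+1). *)
Lemma Bnext_add_eq_or (P : fa_H F -> fa_H F -> Prop) g0 h h' g g' :
  g0 \in Gamma ->
  h = h' \/ Bnext al Gamma P h h' -> g = g' \/ Bnext al Gamma P g g' ->
  reach g0 (fa_add F h g) -> reach g0 (fa_add F h' g') ->
  fa_add F h g = fa_add F h' g' \/ Bnext al Gamma P (fa_add F h g) (fa_add F h' g').
Proof.
move=> g0G Hhh' Hgg' r0 r0'.
case: (eqVneq (fa_add F h g) (fa_add F h' g')) => [->|ne]; [by left | right].
have B0sum x x' : x \in Gamma -> x' \in Gamma ->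
    reach (fa_add F h g) x -> reach (fa_add F h' g') x' ->
    B0 Gamma (fa_add F h g) (fa_add F h' g').
  by move=> xG x'G rx rx'; split;
    [exact: class_between r0 rx | exact: class_between r0' rx' | exact/eqP].
case: Hhh' => [Ehh'|Phh']; case: Hgg' => [Egg'|Pgg'].
- by subst; rewrite eqxx in ne.
- subst h'; have [gG g'G _] := Bnext_B0 Pgg'.
  have := B0sum _ _ gG g'G (reach_addl _ _) (reach_addl _ _).
  by rewrite !(addC h); apply: Bnext_add1.
- subst g'; have [hG h'G _] := Bnext_B0 Phh'.
  exact/Bnext_add1/(B0sum _ _ hG h'G (reach_addr _ _) (reach_addr _ _)).
- have [hG h'G _] := Bnext_B0 Phh'.
  exact/Bnext_add2/(B0sum _ _ hG h'G (reach_addr _ _) (reach_addr _ _)).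
Qed.

End Bsets.

Section Simk.
Variable B : Type.

Lemma simk_refl k (s : forest B) : simk k s s.
Proof. by elim: k s => [//|k IH] s; split=> u Hu; exists u. Qed.

Lemma simk_cat k (s s' t t' : forest B) :
  simk k s t -> simk k s' t' -> simk k (s ++ s') (t ++ t').
Proof.
case: k => [//|k] /= [st ts] [st' ts'].
by split=> [u /List.in_app_iff [/st|/st']|v /List.in_app_iff [/ts|/ts']] [w [Hw E]];
  exists w; rewrite List.in_app_iff; tauto.
Qed.

Lemma simk_singleton k (u v : tree B) :
  label u = label v -> simk k (children u) (children v) -> simk k.+1 [:: u] [:: v].
Proof. by move=> El Ec; split=> _ [<-|[]]; eexists; (split; first by left). Qed.

End Simk.

Lemma pairs_of_witnesses (T U : Type) (Q : T -> U -> Prop) (s : seq T) (t : seq U) :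
  (forall u, List.In u s -> exists v, List.In v t /\ Q u v) ->
  exists L : seq (T * U),
    map fst L = s /\ forall p, List.In p L -> List.In p.2 t /\ Q p.1 p.2.
Proof.
elim: s => [|u s IH] H; first by exists [::].
have [L [<- HL]] := IH (fun u Hu => H u (or_intror Hu)).
have [v [Hv Quv]] := H u (or_introl erefl).
by exists ((u, v) :: L); split=> // p /= [<-|/HL].
Qed.

Lemma matching_pairs (T U : Type) (Q : T -> U -> Prop) (s : seq T) (t : seq U) :
  (forall u, List.In u s -> exists v, List.In v t /\ Q u v) ->
  (forall v, List.In v t -> exists u, List.In u s /\ Q u v) ->
  exists L : seq (T * U), [/\ forall p, List.In p L -> Q p.1 p.2,
    forall u, List.In u (map fst L) <-> List.In u s &
    forall v, List.In v (map snd L) <-> List.In v t].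
Proof.
move=> st ts.
have [L1 [E1 HL1]] := pairs_of_witnesses st.
have [L2 [E2 HL2]] := pairs_of_witnesses (Q := fun v u => Q u v) ts.
pose swap (p : U * T) := (p.2, p.1).
exists (L1 ++ map swap L2); split.
- move=> p /List.in_app_iff [/HL1 []//|/List.in_map_iff [q [<- /HL2 []//]]].
- move=> u; rewrite map_cat -map_comp E1 List.in_app_iff; split; last by left.
  by case=> // /List.in_map_iff [p [<- /HL2 []]] /=.
- move=> v; rewrite map_cat -map_comp E2 List.in_app_iff; split; last by right.
  by case=> // /List.in_map_iff [p [<- /HL1 []]] /=.
Qed.

Section Homomorphism.
Variables (A : Type) (F : forest_algebra).
Variables (aH : forest A -> fa_H F) (aV : context A -> fa_V F).
Hypothesis hom : is_fa_hom aH aV.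

Lemma aH_cat s t : aH (s ++ t) = fa_add F (aH s) (aH t).
Proof. by case: hom. Qed.

Lemma aH_cons u s : aH (u :: s) = fa_add F (aH [:: u]) (aH s).
Proof. exact: aH_cat [:: u] s. Qed.

Lemma aH_node a c : aH [:: Node a c] = fa_act F (aV (cletter a)) (aH c).
Proof. by case: hom => _ _ _ _ <-; rewrite /= cats0. Qed.

Lemma reach_aH_In s u : List.In u s -> reach (aH s) (aH [:: u]).
Proof.
move=> /(List.in_split u s) [l [r ->]]; rewrite aH_cat aH_cons.
exact: reach_trans (reach_addl _ _) (reach_addr _ _).
Qed.

Variable Gamma : {set fa_H F}.
Hypothesis Gamma_class : is_reach_class Gamma.
Local Notation al := (fun a => aV (cletter a)).
Local Notation relab := (relabelG aH Gamma).

Lemma alphaG_class s : aH s \in Gamma -> alphaG aH Gamma s = None.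
Proof. by move=> sG; rewrite /alphaG (negbTE (class_not_above Gamma_class sG)). Qed.

Lemma relabelG_cat s t : relab (s ++ t) = relab s ++ relab t.
Proof. exact: map_cat. Qed.

Lemma Bset_sound k h h' :
  (forall h, exists s, aH s = h) -> Bset al Gamma k h h' ->
  exists s t, [/\ simk k (relab s) (relab t), aH s = h & aH t = h'].
Proof.
move=> surj; elim: k h h' => [|k IH] h h'.
  by move=> _; have [s <-] := surj h; have [t <-] := surj h'; exists s, t.
elim=> {h h'} [a h h' /[dup] /IH [s [t [st <- <-]]] /Bset_B0 [sG tG _] _
              |h h' g _ [s [t [st <- <-]]] _
              |h h' g g' _ [s [t [st <- <-]]] _ [x [y [xy <- <-]]] _].
- exists [:: Node a s], [:: Node a t]; rewrite !aH_node; split=> //.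
  by apply: simk_singleton; rewrite //= !alphaG_class.
- have [x <-] := surj g; exists (s ++ x), (t ++ x).
  by rewrite !aH_cat !relabelG_cat; split=> //; exact: simk_cat st (simk_refl _ _).
- exists (s ++ x), (t ++ y).
  by rewrite !aH_cat !relabelG_cat; split=> //; apply: simk_cat.
Qed.

Definition node_match k (u v : tree A) : Prop :=
  [/\ label u = label v, alphaG aH Gamma (children u) = alphaG aH Gamma (children v)
    & simk k (relab (children u)) (relab (children v))].

Local Notation relabT := (relabel_tree (fun a t => (a, alphaG aH Gamma t))).

Lemma node_match_relabel k u v :
  label (relabT u) = label (relabT v) ->
  simk k (children (relabT u)) (children (relabT v)) -> node_match k u v.
Proof. by case: u v => a c [a' c'] /= [-> Ea] Ec; split. Qed.

Lemma simk_succ_node_match k s t :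
  simk k.+1 (relab s) (relab t) ->
  (forall u, List.In u s -> exists v, List.In v t /\ node_match k u v) /\
  (forall v, List.In v t -> exists u, List.In u s /\ node_match k u v).
Proof.
case=> st ts; split=> [u /(List.in_map relabT) /st | v /(List.in_map relabT) /ts]
  [_ [/List.in_map_iff [w [<- Hw]] [El Ec]]];
  by exists w; split=> //; apply: node_match_relabel El Ec.
Qed.

Lemma node_match_eq_or_Bset k u v g g' :
  g \in Gamma -> g' \in Gamma -> reach g (aH [:: u]) -> reach g' (aH [:: v]) ->
  node_match k u v ->
  (forall c c', aH c \in Gamma -> aH c' \in Gamma -> aH c <> aH c' ->
     simk k (relab c) (relab c') -> Bset al Gamma k (aH c) (aH c')) ->
  aH [:: u] = aH [:: v] \/ Bset al Gamma k.+1 (aH [:: u]) (aH [:: v]).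
Proof.
case: u v => [a c] [a' c'] gG g'G ru rv [/= Eaa' + Ec] IH; subst a'.
rewrite !aH_node in ru rv *.
have rc := reach_trans ru (reach_act _ _); have rc' := reach_trans rv (reach_act _ _).
(* Equal alpha_Gamma-values: either both children are above Gamma and have
   equal values, or both are in Gamma. *)
rewrite /alphaG; case: ifP => [_|/negbT Nc]; case: ifP => [_|/negbT Nc'] //.
  by case=> ->; left.
move=> _; have cG := class_of_not_above Gamma_class gG rc Nc.
have c'G := class_of_not_above Gamma_class g'G rc' Nc'.
have [->|ne] := eqVneq (aH c) (aH c'); first by left.
set va := aV (cletter a) in ru rv *.
have [->|ne'] := eqVneq (fa_act F va (aH c)) (fa_act F va (aH c')); first by left.
right; apply: (Bnext_base (IH _ _ cG c'G (elimN eqP ne) Ec)).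
split; last exact/eqP.
- exact: class_between gG cG ru (reach_act _ _).
- exact: class_between g'G c'G rv (reach_act _ _).
Qed.

Hypothesis addhh : forall h : fa_H F, fa_add F h h = h.
Hypothesis addC : forall h g : fa_H F, fa_add F h g = fa_add F g h.

Lemma aH_absorb1 s u : List.In u s -> fa_add F (aH s) (aH [:: u]) = aH s.
Proof.
elim: s => [//|x s IH] /= [->|Hu]; rewrite aH_cons.
- by rewrite addC fa_addA addhh.
- by rewrite -fa_addA IH.
Qed.

Lemma aH_absorb s s' :
  (forall u, List.In u s' -> List.In u s) -> fa_add F (aH s) (aH s') = aH s.
Proof.
elim: s' => [|u s' IH] sub; first by case: hom => -> *; rewrite fa_addr0.
rewrite aH_cons fa_addA aH_absorb1; last by apply: sub; left.
by apply: IH => v Hv; apply: sub; right.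
Qed.

Lemma aH_eq_of_same_trees s s' :
  (forall u, List.In u s <-> List.In u s') -> aH s = aH s'.
Proof.
move=> E; rewrite -(aH_absorb (s' := s')) => [|u /E //].
by rewrite addC aH_absorb // => u /E.
Qed.

Lemma Bnext_sum_eq_or (P : fa_H F -> fa_H F -> Prop) g0 (L : seq (tree A * tree A)) :
  g0 \in Gamma ->
  (forall p, List.In p L ->
     aH [:: p.1] = aH [:: p.2] \/ Bnext al Gamma P (aH [:: p.1]) (aH [:: p.2])) ->
  reach g0 (aH (map fst L)) -> reach g0 (aH (map snd L)) ->
  aH (map fst L) = aH (map snd L) \/
  Bnext al Gamma P (aH (map fst L)) (aH (map snd L)).
Proof.
move=> g0G; elim: L => [|[u v] L IH] HL /= r r'; first by left.
rewrite (aH_cons u) in r; rewrite (aH_cons v) in r'; rewrite (aH_cons u) (aH_cons v).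
apply: (Bnext_add_eq_or Gamma_class addC g0G _ _ r r').
- exact: HL (or_introl erefl).
- apply: IH => [p Hp||]; first exact: HL (or_intror Hp).
  + exact: reach_trans r (reach_addl _ _).
  + exact: reach_trans r' (reach_addl _ _).
Qed.

Lemma Bset_complete k s t :
  aH s \in Gamma -> aH t \in Gamma -> aH s <> aH t ->
  simk k (relab s) (relab t) -> Bset al Gamma k (aH s) (aH t).
Proof.
elim: k s t => [|k IH] s t sG tG ne; first by [].
case/simk_succ_node_match=> st ts.
have [L [HL /aH_eq_of_same_trees Es /aH_eq_of_same_trees Et]] := matching_pairs st ts.
rewrite -Es -Et in sG tG ne *.
have pairs p : List.In p L -> aH [:: p.1] = aH [:: p.2] \/
    Bset al Gamma k.+1 (aH [:: p.1]) (aH [:: p.2]).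
  move=> Hp; apply: (node_match_eq_or_Bset sG tG _ _ (HL _ Hp) IH).
  - exact/reach_aH_In/List.in_map.
  - exact/reach_aH_In/List.in_map.
have rst := class_reach Gamma_class sG tG.
by have [/ne []|] := Bnext_sum_eq_or sG pairs (reach_refl _) rst.
Qed.

End Homomorphism.

Theorem theorem4 (A : finType) (F : forest_algebra)
    (aH : forest A -> fa_H F) (aV : context A -> fa_V F)
    (Gamma : {set fa_H F}) :
  is_fa_hom aH aV ->
  (forall h, exists s, aH s = h) ->
  (forall v, exists p, aV p = v) ->
  (forall h, fa_add F h h = h) ->
  (forall h g, fa_add F h g = fa_add F g h) ->
  is_reach_class Gamma ->
  (forall (k : nat) (h h' : fa_H F), h \in Gamma -> h' \in Gamma -> h <> h' ->
     (Bset (fun a => aV (cletter a)) Gamma k h h' <->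
      exists s t : forest A,
        [/\ simk k (relabelG aH Gamma s) (relabelG aH Gamma t),
            aH s = h & aH t = h'])) /\
  (forall (k : nat) (h h' : fa_H F),
     Bset (fun a => aV (cletter a)) Gamma k.+1 h h' ->
     Bset (fun a => aV (cletter a)) Gamma k h h').
Proof.
move=> hom surj _ addhh addC Gamma_class; split=> [k h h' hG h'G ne|k h h'].
  split; first exact: Bset_sound.
  by case=> s [t [st Es Et]]; subst h h'; apply: Bset_complete.
exact: Bset_succ.
Qed.
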